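(* Let $m\ge2$, let $k_1,\dots,k_{m-1}\ge0$ be integers and let $j$ be an integer with $1\le j\le m/2$. Then $\big|e^{(m),j+1}_{k_1,\dots,k_{m-1}}\big|\le\big|e^{(m),j}_{k_1,\dots,k_{m-1}}\big|$. Moreover, if $k_{m-j}\ge1$, then $\big|e^{(m),j+1}_{k_1,\dots,k_{m-1}}\big|\le\frac{j}{m-j}\big|e^{(m),j}_{k_1,\dots,k_{m-1}}\big|$.
   Context: For $1\le j\le m$ and integers $k_1,\dots,k_{m-1}\ge0$, $e^{(m),j}_{k_1,\dots,k_{m-1}}=\prod_{1\le i\le m,\,i\ne j}(i-j)^{k_{(i-j)\bmod m}}$, where $(i-j)\bmod m$ denotes the representative in $\{1,\dots,m-1\}$. *)

From HB Require Import structures.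
From mathcomp Require Import all_boot all_order all_algebra.
Set Implicit Arguments. Unset Strict Implicit. Unset Printing Implicit Defensive.
Import Order.TTheory GRing.Theory Num.Theory.
Local Open Scope ring_scope.

Definition resid (m i j : nat) : nat := absz ((i%:Z - j%:Z) %% m%:Z)%Z.

(* e^{(m),j}_{k_1,...,k_{m-1}} = prod_{1<=i<=m, i<>j} (i-j)^{k_{(i-j) mod m}},
   with the exponent sequence given as k : nat -> nat (only k 1 .. k (m-1) are used). *)
Definition e (m j : nat) (k : nat -> nat) : int :=
  \prod_(1 <= i < m.+1 | i != j) (i%:Z - j%:Z) ^+ k (resid m i j).

From HB Require Import structures.
From mathcomp Require Import all_boot all_order all_algebra.
From mathcomp Require Import zify.
Import Order.TTheory GRing.Theory Num.Theory.
Local Open Scope ring_scope.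

(* Write e^{j} for e^{(m),j}_{k}.  The factors of e^{j+1},
   indexed by i = 2, ..., m (i <> j+1), are exactly the factors of e^{j}
   indexed by i - 1 = 1, ..., m-1 (i-1 <> j): the base (i-(j+1)) = ((i-1)-j)
   and the residue of the exponent index agree.  The only unmatched factors are
     in e^{j}   :  i = m,  giving (m-j)^{k_{m-j}},
     in e^{j+1} :  i = 1,  giving (-j)^{k_{m-j}}    (since 1-(j+1) = -j = m-j mod m).
   Hence e^{j} = (m-j)^n * P and e^{j+1} = (-j)^n * P with n = k_{m-j} and a
   common product P (lemma [e_split]).  As j <= m-j, |(-j)^n| <= (m-j)^n, and
   when n >= 1 one factor j/(m-j) can be split off (lemma [exprn_ratio_le]). *)

Lemma resid_shift (m i j : nat) : resid m i.+1 j.+1 = resid m i j.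
Proof. by rewrite /resid; have -> : i.+1%:Z - j.+1%:Z = i%:Z - j%:Z by lia. Qed.

Lemma resid_last (m j : nat) :
  (0 < j)%N -> (j < m)%N -> resid m m j = (m - j)%N.
Proof.
move=> j0 jm; rewrite /resid modz_small; first by lia.
by apply/andP; split; lia.
Qed.

(* The first index i = 1 of e^{j+1} also carries the exponent k_{m-j},
   because 1 - (j+1) = -j is congruent to m - j modulo m. *)
Lemma resid_first (m j : nat) :
  (0 < j)%N -> (j < m)%N -> resid m 1 j.+1 = (m - j)%N.
Proof.
move=> j0 jm; rewrite /resid.
have -> : 1%:Z - j.+1%:Z = (-1) * m%:Z + (m%:Z - j%:Z) by lia.
rewrite modzMDl modz_small; first by lia.
by apply/andP; split; lia.
Qed.

Definition e_common (m j : nat) (k : nat -> nat) : int :=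
  \prod_(1 <= i < m | i != j) (i%:Z - j%:Z) ^+ k (resid m i j).

Lemma e_split (m j : nat) (k : nat -> nat) : (0 < j)%N -> (j < m)%N ->
  e m j k = (m - j)%N%:Z ^+ k (m - j)%N * e_common m j k /\
  e m j.+1 k = (- j%:Z) ^+ k (m - j)%N * e_common m j k.
Proof.
move=> j0 jm; rewrite /e /e_common; split.
  rewrite big_mkcond big_nat_recr /=; last by lia.
  have -> : (m != j) = true by apply/eqP; lia.
  rewrite resid_last // mulrC -big_mkcond.
  by have -> : m%:Z - j%:Z = (m - j)%N%:Z by lia.
rewrite big_mkcond big_ltn; last by lia.
have -> : (1 != j.+1) = true by apply/eqP; lia.
rewrite resid_first // big_add1 /= [in RHS]big_mkcond.
have -> : 1%:Z - j.+1%:Z = - j%:Z by lia.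
congr (_ * _); apply: eq_bigr => i _.
by rewrite eqSS resid_shift; have -> : i.+1%:Z - j.+1%:Z = i%:Z - j%:Z by lia.
Qed.

Lemma exprn_ratio_le (R : realFieldType) (a b : R) (n : nat) :
  0 <= a -> a <= b -> 0 < b -> (1 <= n)%N -> a ^+ n <= a / b * b ^+ n.
Proof.
move=> a0 ab b0; case: n => [//|n] _.
rewrite !exprS mulrA divfK ?gt_eqF //.
by apply: ler_wpM2l => //; apply: lerXn2r; rewrite ?qualifE //= (le_trans a0).
Qed.

Theorem mainTheorem14 (m : nat) (k : nat -> nat) (j : nat) :
  (2 <= m)%N -> (1 <= j)%N -> (2 * j <= m)%N ->
  `|e m j.+1 k| <= `|e m j k| /\
  ((1 <= k (m - j))%N ->
    `|(e m j.+1 k)%:~R : rat| <= (j%:R / (m - j)%:R) * `|(e m j k)%:~R : rat|).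
Proof.
move=> _ j1 jm.
have j_lt_m : (j < m)%N by lia.
have [-> ->] := @e_split m j k j1 j_lt_m.
have j_le_mj : (j <= m - j)%N by lia.
split.
  rewrite !normrM !normrX normrN.
  apply: ler_wpM2r; first exact: normr_ge0.
  by apply: lerXn2r; rewrite ?qualifE //= lez_nat.
move=> n1.
rewrite !rmorphM !rmorphXn /= rmorphN !normrM !normrX normrN !normr_nat mulrA.
apply: ler_wpM2r; first exact: normr_ge0.
apply: exprn_ratio_le => //; first by rewrite ler_nat.
by rewrite ltr0n; lia.
Qed.
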